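(* Let $\Omega$ be a finite set, $V_\Omega=\mathbb{R}^\Omega$, and $V_\Upsilon,V_\Gamma\le V_\Omega$. Let $\mathcal{P}$, $\mathcal{Q}$, $\mathcal{R}$ be orthogonal decompositions of $V_\Omega$, $V_\Upsilon$, $V_\Gamma$, respectively, such that $\mathcal{Q}$ and $\mathcal{R}$ are both structure balanced in relation to $\mathcal{P}$. If $\mathbf{PQPRP}$ is symmetric for all $\mathbf{P}\in\mathcal{P}$, $\mathbf{Q}\in\mathcal{Q}$ and $\mathbf{R}\in\mathcal{R}$, then the decomposition $\mathcal{P}\vartriangleright\mathcal{Q}$ is compatible with the decomposition $\mathcal{P}\vartriangleright\mathcal{R}$, i.e. $\mathbf{BC}=\mathbf{CB}$ for all $\mathbf{B}\in\mathcal{P}\vartriangleright\mathcal{Q}$ and all $\mathbf{C}\in\mathcal{P}\vartriangleright\mathcal{R}$.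
   Context: $V_\Omega$ carries the standard inner product; all matrices are $\Omega\times\Omega$. An orthogonal decomposition of a subspace $W\le V_\Omega$ is a finite set of nonzero symmetric idempotent matrices that are mutually orthogonal and whose sum is the orthogonal projector onto $W$; zero matrices are discarded from listed decompositions. For projectors $\mathbf{A},\mathbf{B}$: $\mathbf{B}$ has first-order balance in relation to $\mathbf{A}$ if $\mathbf{BAB}=\lambda_{\mathbf{AB}}\mathbf{B}$ for a scalar $\lambda_{\mathbf{AB}}$; if $\lambda_{\mathbf{AB}}\ne0$, $\mathbf{A}\vartriangleright\mathbf{B}=\lambda_{\mathbf{AB}}^{-1}\mathbf{ABA}$. $\mathcal{B}$ is structure balanced in relation to $\mathcal{A}$ if every $\mathbf{B}\in\mathcal{B}$ has first-order balance in relation to every $\mathbf{A}\in\mathcal{A}$, and $\mathbf{B}_1\mathbf{A}\mathbf{B}_2=\mathbf{0}$ for all $\mathbf{A}\in\mathcal{A}$ and distinct $\mathbf{B}_1,\mathbf{B}_2\in\mathcal{B}$. Then $\mathbf{A}\vdash\mathcal{B}=\mathbf{A}-\sum'_{\mathbf{B}}\mathbf{A}\vartriangleright\mathbf{B}$ (sum over $\mathbf{B}$ with $\lambda_{\mathbf{AB}}\ne0$) and $\mathcal{A}\vartriangleright\mathcal{B}=\{\mathbf{A}\vartriangleright\mathbf{B}:\mathbf{A}\in\mathcal{A},\mathbf{B}\in\mathcal{B},\lambda_{\mathbf{AB}}\neq0\}\cup\{\mathbf{A}\vdash\mathcal{B}:\mathbf{A}\in\mathcal{A}\}$ (zeros discarded).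 *)

(* Omega = 'I_n, V_Omega = R^n with R a real field,
   matrices are 'M[R]_n. Finite sets of matrices are represented by seqs. *)
From HB Require Import structures.
From mathcomp Require Import all_boot all_order all_algebra.
From Stdlib Require Import ClassicalEpsilon.
Set Implicit Arguments. Unset Strict Implicit. Unset Printing Implicit Defensive.
Import Order.TTheory GRing.Theory Num.Theory.
Local Open Scope ring_scope.

Section Defs.
Variables (R : realFieldType) (n : nat).
Notation M := ('M[R]_n).

Definition is_orth_proj (P U : M) : Prop :=
  P^T = P /\ P *m P = P /\ (P == U)%MS.

Definition orth_decomp (D : seq M) (U : M) : Prop :=
  uniq D /\
  (forall A, A \in D -> A != 0 /\ A^T = A /\ A *m A = A) /\
  (forall A B, A \in D -> B \in D -> A != B -> A *m B = 0) /\
  is_orth_proj (\sum_(A <- D) A) U.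

Definition fo_balance (A B : M) : Prop := exists l : R, B *m A *m B = l *: B.

(* the scalar lambda_{AB} (uniquely determined when B != 0 has balance wrt A) *)
Definition lam (A B : M) : R :=
  epsilon (inhabits 0) (fun l : R => B *m A *m B = l *: B).

Definition tri (A B : M) : M := (lam A B)^-1 *: (A *m B *m A).

Definition struct_balanced (Q P : seq M) : Prop :=
  (forall B A, B \in Q -> A \in P -> fo_balance A B) /\
  (forall A B1 B2, A \in P -> B1 \in Q -> B2 \in Q -> B1 != B2 ->
     B1 *m A *m B2 = 0).

Definition vdash (A : M) (Q : seq M) : M :=
  A - \sum_(B <- Q | lam A B != 0) tri A B.

(* P |> Q, zero matrices discarded *)
Definition triset (P Q : seq M) : seq M :=
  [seq X <- [seq tri A B | A <- P, B <- [seq B <- Q | lam A B != 0]]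
            ++ [seq vdash A Q | A <- P] | X != 0].

End Defs.

From HB Require Import structures.
From mathcomp Require Import all_boot all_order all_algebra.
Import Order.TTheory GRing.Theory Num.Theory.
Local Open Scope ring_scope.
Set Implicit Arguments. Unset Strict Implicit.

(* Every element of P |> Q is either A |> B or A |- Q for a single A in P,
   and is absorbed by A on both sides.  Elements built over different
   (orthogonal) projectors of P therefore multiply to 0 in either order.
   Over the same A, everything reduces to the commutation of the
   compressions ABA and ACA, and (ABA)(ACA) = ABACA is symmetric by
   hypothesis, so it equals its transpose (ACA)(ABA). *)

Section Triset.
Variables (R : realFieldType) (n : nat).
Implicit Types (A B C X Y : 'M[R]_n) (S : seq 'M[R]_n).

Definition tri_block A S X := (exists2 B, B \in S & X = tri A B) \/ X = vdash A S.

Lemma mem_triset P S X :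
  X \in triset P S -> exists2 A, A \in P & tri_block A S X.
Proof.
rewrite /triset mem_filter => /andP[_]; rewrite mem_cat => /orP[].
  case/allpairsPdep => A [B [PA + ->]]; rewrite mem_filter => /andP[_ SB].
  by exists A => //; left; exists B.
by case/mapP => A PA ->; exists A => //; right.
Qed.

Lemma comm_mx_scaler a X Y : comm_mx X Y -> comm_mx X (a *: Y).
Proof. by rewrite /comm_mx => XY; rewrite -scalemxAr -scalemxAl XY. Qed.

Lemma comm_compression A B C :
  A^T = A -> A *m A = A -> B^T = B -> C^T = C ->
  (A *m B *m A *m C *m A)^T = A *m B *m A *m C *m A ->
  comm_mx (A *m B *m A) (A *m C *m A).
Proof.
move=> tA idA tB tC sym.
have mulAA Z : Z *m A *m A = Z *m A by rewrite -mulmxA idA.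
by rewrite /comm_mx !mulmxA !mulAA -sym !trmx_mul tA tB tC !mulmxA.
Qed.

Lemma mulmx_orth_proj A A' X Y :
  X *m A = X -> A' *m Y = Y -> A *m A' = 0 -> X *m Y = 0.
Proof. by move=> XA AY AA'; rewrite -XA -AY mulmxA -(mulmxA X) AA' mulmx0 mul0mx. Qed.

Section Block.
Variable A : 'M[R]_n.
Hypothesis idA : A *m A = A.

Lemma mul_proj_tri B : A *m tri A B = tri A B.
Proof. by rewrite /tri -scalemxAr !mulmxA idA. Qed.

Lemma mul_tri_proj B : tri A B *m A = tri A B.
Proof. by rewrite /tri -scalemxAl -mulmxA idA. Qed.

Lemma tri_block_absorb S X : tri_block A S X -> A *m X = X /\ X *m A = X.
Proof.
case=> [[B _ ->]|->]; first by rewrite mul_proj_tri mul_tri_proj.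
rewrite /vdash mulmxBr mulmxBl idA mulmx_sumr mulmx_suml.
by split; congr (_ - _); apply: eq_bigr => B _;
  rewrite ?mul_proj_tri ?mul_tri_proj.
Qed.

Lemma comm_tri_compression B C :
  comm_mx (A *m B *m A) (A *m C *m A) -> comm_mx (tri A B) (tri A C).
Proof. by move=> BC; apply/comm_mx_scaler/comm_mx_sym/comm_mx_scaler/comm_mx_sym. Qed.

Lemma comm_vdash S X :
  comm_mx X A -> (forall B, B \in S -> comm_mx X (tri A B)) ->
  comm_mx X (vdash A S).
Proof.
move=> XA XS; apply: comm_mxB => //.
by rewrite big_seq_cond; apply: comm_mx_sum => B /andP[/XS].
Qed.

Lemma comm_tri_block S S' X Y :
  (forall B C, B \in S -> C \in S' -> comm_mx (tri A B) (tri A C)) ->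
  tri_block A S X -> tri_block A S' Y -> comm_mx X Y.
Proof.
move=> SS' bX bY.
have XA : comm_mx X A by have [AX XA] := tri_block_absorb bX; rewrite /comm_mx AX XA.
have YA : comm_mx Y A by have [AY YA] := tri_block_absorb bY; rewrite /comm_mx AY YA.
have XS' : forall C, C \in S' -> comm_mx X (tri A C).
  move=> C S'C; apply/comm_mx_sym; case: bX => [[B SB ->]|->].
    exact/comm_mx_sym/SS'.
  apply: comm_vdash => [|B SB]; last exact/comm_mx_sym/SS'.
  by rewrite /comm_mx mul_proj_tri mul_tri_proj.
by case: bY => [[C S'C ->]|->]; [apply: XS' | apply: comm_vdash].
Qed.

End Block.
End Triset.

Theorem lemma2 (R : realFieldType) (n : nat) (U G : 'M[R]_n)
  (P Q Rd : seq 'M[R]_n) :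
  orth_decomp P 1%:M -> orth_decomp Q U -> orth_decomp Rd G ->
  struct_balanced Q P -> struct_balanced Rd P ->
  (forall A B C, A \in P -> B \in Q -> C \in Rd ->
     (A *m B *m A *m C *m A)^T = A *m B *m A *m C *m A) ->
  forall X Y, X \in triset P Q -> Y \in triset P Rd -> X *m Y = Y *m X.
Proof.
move=> [_ [projP [orthP _]]] [_ [projQ _]] [_ [projR _]] _ _ sym X Y.
move=> /mem_triset[A PA bX] /mem_triset[A' PA' bY].
have [_ [tA idA]] := projP A PA; have [_ [_ idA']] := projP A' PA'.
have [AX XA] := tri_block_absorb idA bX; have [AY YA] := tri_block_absorb idA' bY.
have [eqAA'|neqAA'] := eqVneq A A'; last first.
  rewrite (mulmx_orth_proj XA AY (orthP _ _ PA PA' neqAA')).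
  by rewrite (mulmx_orth_proj YA AX (orthP _ _ PA' PA _)) // eq_sym.
subst A'; apply: (comm_tri_block idA _ bX bY) => B C QB RC.
have [_ [tB _]] := projQ B QB; have [_ [tC _]] := projR C RC.
exact/comm_tri_compression/comm_compression/sym.
Qed.
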